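(* Let $A$ be a finite involutive alphabet and let $\Gamma$ be a rooted involutive $A$-tree. Then $\Gamma$ is deterministic and context-free if and only if $\Gamma$ is isomorphic, as a rooted involutive $A$-graph (without node labels), to $\Gamma(p)$ for some state $p$ of a reduced pDFA over $A$.
   Context: An $A$-graph is a pair $(V,E)$ with $E\subseteq V\times A\times V$; it is deterministic if $(u,a,v),(u,a,v')\in E$ imply $v=v'$; it is involutive if $(u,a,v)\in E\iff(v,a^{-1},u)\in E$. A path is reduced if no edge in it is immediately followed by its inverse; a rooted involutive graph is a tree if each vertex is the end of a unique reduced path from the root. Context-free: for a connected rooted involutive graph, the level of a node is its distance from the root; for $v$ at level $n$ the end-cone $\Gamma(v)$ is the connected component containing $v$ of the subgraph induced on nodes of level $\ge n$, and its nodes of level $n$ are its frontier points. An end-isomorphism is a label-preserving graph isomorphism between two end-cones mapping frontier points onto frontier points. A connected involutive $A$-graph ($A$ finite involutive) is context-free if it has uniformly bounded degree and for some choice of root there are only finitely many end-isomorphism classes of end-cones. A partial deterministic finite automaton (pDFA) over a finite alphabet $A$ is a finite deterministic $A$-graph $(Q,T)$ (states and transitions). For a state $p$, $\Gamma(p)$ is the graph whose nodes are the runs (finite paths) of the pDFA starting at $p$, with the empty run as root and an edge from a run $\varrho$ to $\varrho\tau$ labeled by the label of the transition $\tau$, then closed under adding all inverse edges $(v,a^{-1},u)$ (viewing $A$ as involutive, passing to $A^{\pm1}=A\uplus A^{-1}$ if necessary). A pDFA over an involutive alphabet is reduced if it contains no path labeled $aa^{-1}$ for any $a\in A$. *)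

From mathcomp Require Import all_boot.
Set Implicit Arguments. Unset Strict Implicit. Unset Printing Implicit Defensive.

Section Graphs.
Variables (A : finType) (inv : A -> A).

Variables (V : Type) (E : V -> A -> V -> Prop).

Definition deterministic : Prop :=
  forall u a v v', E u a v -> E u a v' -> v = v'.

Definition involutive_graph : Prop :=
  forall u a v, E u a v <-> E v (inv a) u.

Fixpoint is_path_from (u : V) (p : seq (V * A * V)) : Prop :=
  match p with
  | [::] => True
  | (x, a, y) :: p' => x = u /\ E x a y /\ is_path_from y p'
  end.

Fixpoint path_end (u : V) (p : seq (V * A * V)) : V :=
  match p with
  | [::] => u
  | (_, _, y) :: p' => path_end y p'
  end.

Fixpoint reduced_path (p : seq (V * A * V)) : Prop :=
  match p with
  | (x, a, y) :: (((y', b, z) :: _) as p') =>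
      ~ (y' = y /\ b = inv a /\ z = x) /\ reduced_path p'
  | _ => True
  end.

Definition is_tree (r : V) : Prop :=
  forall v, exists! p, [/\ is_path_from r p, reduced_path p & path_end r p = v].

Inductive walk : V -> V -> nat -> Prop :=
  | walk0 v : walk v v 0
  | walkS u a w v n : E u a w -> walk w v n -> walk u v n.+1.

Definition level (r v : V) (n : nat) : Prop :=
  walk r v n /\ forall m, walk r v m -> n <= m.

Inductive walk_in (P : V -> Prop) : V -> V -> Prop :=
  | walk_in0 v : P v -> walk_in P v v
  | walk_inS u a w v : P u -> E u a w -> walk_in P w v -> walk_in P u v.

(* w is a node of the end-cone Gamma(v) (w.r.t. root r) *)
Definition in_cone (r v w : V) : Prop :=
  exists n, level r v n /\
    walk_in (fun x => exists k, level r x k /\ n <= k) v w.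

Definition frontier (r v w : V) : Prop :=
  in_cone r v w /\ exists n, level r v n /\ level r w n.

Definition end_isomorphic (r v v' : V) : Prop :=
  exists (f g : V -> V),
    [/\ forall x, in_cone r v x -> in_cone r v' (f x) /\ g (f x) = x,
        forall y, in_cone r v' y -> in_cone r v (g y) /\ f (g y) = y,
        forall x a y, in_cone r v x -> in_cone r v y ->
          (E x a y <-> E (f x) a (f y))
      & forall x, in_cone r v x -> (frontier r v x <-> frontier r v' (f x))].

(* Uniformly bounded degree: at most N distinct pairs (a,v) with (u,a,v) in E. *)
Definition bounded_degree : Prop :=
  exists N : nat, forall (u : V) (n : nat) (h : 'I_n -> A * V),
    injective h -> (forall i, E u (h i).1 (h i).2) -> n <= N.

Definition context_free : Prop :=
  bounded_degree /\
  exists r : V, exists (n : nat) (rep : 'I_n -> V),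
    forall v, exists i, end_isomorphic r v (rep i).

End Graphs.

Section PDFA.
Variables (A : finType) (inv : A -> A).

Variables (Q : finType) (T : Q -> A -> option Q).

Definition reduced_pdfa : Prop :=
  forall q1 q2 q3 a, T q1 a = Some q2 -> T q2 (inv a) = Some q3 -> False.

Fixpoint is_run (q : Q) (s : seq (Q * A * Q)) : bool :=
  match s with
  | [::] => true
  | (q1, a, q2) :: s' => [&& q1 == q, T q1 a == Some q2 & is_run q2 s']
  end.

Definition run (p : Q) := {s : seq (Q * A * Q) | is_run p s}.

Definition run_root (p : Q) : run p := exist _ [::] isT.

(* Gamma(p): edge rho -> rho tau labelled by the label of tau, closed under
   inverse edges. *)
Definition run_edge (p : Q) (x : run p) (a : A) (y : run p) : Prop :=
  (exists tau : Q * A * Q, sval y = rcons (sval x) tau /\ tau.1.2 = a) \/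
  (exists tau : Q * A * Q, sval x = rcons (sval y) tau /\ inv tau.1.2 = a).

End PDFA.

Definition rooted_iso (A : finType) (V W : Type)
  (E : V -> A -> V -> Prop) (r : V) (F : W -> A -> W -> Prop) (s : W) : Prop :=
  exists (f : V -> W) (g : W -> V),
    [/\ cancel f g, cancel g f, f r = s &
        forall u a v, E u a v <-> F (f u) a (f v)].

(* Seen from any root r', the end-cone of a node v that is not an ancestor of r' is the
   subtree below v, with v as its only frontier point.  In a deterministic tree such a subtree
   is determined, up to isomorphism, by its language: the label words of the downward paths
   from v.  As r' has finitely many ancestors, a context-free deterministic tree has finitely
   many languages of subtrees; they are the states of a reduced pDFA, and sending a node to
   the run of this automaton along the labels of its geodesic is an isomorphism onto the run
   tree.  Conversely, the run tree of a reduced pDFA is deterministic, and a rooted isomorphism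
   preserves levels, so it maps downward edges to one-step extensions of runs; hence a subtree
   has the language of the state its run ends in, and the at most |Q| languages give at most
   |Q| end-isomorphism classes of cones seen from the root. *)

From mathcomp Require Import all_boot zify.
From Stdlib Require Import Classical ClassicalEpsilon.
Set Implicit Arguments. Unset Strict Implicit. Unset Printing Implicit Defensive.

Definition labels (X B : Type) (p : seq (X * B * X)) : seq B := [seq e.1.2 | e <- p].

Lemma labels_rcons (X B : Type) (p : seq (X * B * X)) e :
  labels (rcons p e) = rcons (labels p) e.1.2.
Proof. exact: map_rcons. Qed.

Definition classicb (P : Prop) : bool := if excluded_middle_informative P then true else false.

Lemma classicbP (P : Prop) : reflect P (classicb P).
Proof. by rewrite /classicb; case: excluded_middle_informative => H; constructor. Qed.

Section Graphs.
Variables (A : finType) (inv : A -> A) (V : Type) (E : V -> A -> V -> Prop).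

Lemma path_end_rcons (u : V) p x (a : A) y : path_end u (rcons p (x, a, y)) = y.
Proof. by elim: p u => [|[[x0 a0] y0] p IH] u //=. Qed.

Lemma path_end_cat (u : V) (p q : seq (V * A * V)) :
  path_end u (p ++ q) = path_end (path_end u p) q.
Proof. by elim: p u => [|[[x0 a0] y0] p IH] u //=. Qed.

Lemma is_path_from_rcons (u : V) p x a y :
  is_path_from E u (rcons p (x, a, y)) <->
  [/\ is_path_from E u p, x = path_end u p & E x a y].
Proof.
elim: p u => [|[[x0 a0] y0] p IH] u /=; first by split; [case=> -> [] | case=> _ ->].
by rewrite IH; split; [case=> -> [? []] | case=> [[-> [? ?]] ? ?]].
Qed.

Lemma reduced_path_rconsl (p : seq (V * A * V)) e :
  reduced_path inv (rcons p e) -> reduced_path inv p.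
Proof.
elim: p => [|[[x a] y] p IH] //=.
case: p IH => [|[[x' b] z] p] IH //= [H1 H2].
by split => //; apply: IH.
Qed.

Lemma reduced_path_rcons (p : seq (V * A * V)) x a y : reduced_path inv p ->
  reduced_path inv (rcons p (x, a, y)) \/
  exists p0 b, p = rcons p0 (y, b, x) /\ a = inv b.
Proof.
case: p => [|e1 p] /=; first by left.
elim: p e1 => [|e2 p IH] [[x1 b1] y1] /=.
  move=> _; case: (classic (x = y1 /\ a = inv b1 /\ y = x1)) => [[-> [-> ->]]|H].
    by right; exists [::], b1.
  by left.
case: e2 IH => [[x2 b2] y2] IH [H1 H2].
case: (IH (x2, b2, y2) H2) => [H|[p0 [b [Hp Ha]]]]; first by left.
by right; exists ((x1, b1, y1) :: p0), b; rewrite Hp.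
Qed.

Lemma path_walk (u : V) p : is_path_from E u p -> walk E u (path_end u p) (size p).
Proof.
elim: p u => [|[[x a] y] p IH] u /=; first by move=> _; apply: walk0.
by case=> -> [He H]; apply: walkS He (IH _ H).
Qed.

Lemma walk_rcons u v n a w : walk E u v n -> E v a w -> walk E u w n.+1.
Proof.
by elim=> [x|x b y z m Hxy _ IH] H; [apply: walkS H (walk0 _ _) | apply: walkS Hxy (IH H)].
Qed.

Lemma walk_cat u v n w m : walk E u v n -> walk E v w m -> walk E u w (n + m).
Proof. by elim=> [x|x b y z k Hxy _ IH] // H; apply: walkS Hxy (IH H). Qed.

Lemma walk_sym u v n : involutive_graph inv E -> walk E u v n -> walk E v u n.
Proof.
move=> HE; elim=> [x|x b y z k Hxy _ IH]; first exact: walk0.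
by apply: walk_rcons IH (proj1 (HE _ _ _) Hxy).
Qed.

Lemma walk_bound (d : V -> nat) u x m :
  (forall y a z, E y a z -> d z <= (d y).+1) -> walk E u x m -> d x <= d u + m.
Proof. by move=> Hd; elim=> [y|y b w z k Hyw _ IH]; [lia | have := Hd _ _ _ Hyw; lia]. Qed.

Lemma level_exists u v : (exists n, walk E u v n) -> exists n, level E u v n.
Proof.
move=> [m Hm]; have ex : exists n, classicb (walk E u v n) by exists m; apply/classicbP.
case: (ex_minnP ex) => n /classicbP Hn Hmin; exists n; split => // k Hk.
by apply: Hmin; apply/classicbP.
Qed.

Lemma level_uniq u v n m : level E u v n -> level E u v m -> n = m.
Proof. by case=> H1 H2 [H3 H4]; apply/eqP; rewrite eqn_leq H2 // H4. Qed.

Lemma walk_in_rcons P u y a x : walk_in E P u y -> E y a x -> P x -> walk_in E P u x.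
Proof.
elim=> [z Pz|z b w t Pz Hzw _ IH] H Px; first exact: walk_inS Pz H (walk_in0 _ Px).
exact: walk_inS Pz Hzw (IH H Px).
Qed.

Lemma end_isomorphic_sym r v w : end_isomorphic E r v w -> end_isomorphic E r w v.
Proof.
case=> f [g [H1 H2 H3 H4]]; exists g, f; split => // [x a y cx cy | y cy].
  case: (H2 x cx) => cgx fgx; case: (H2 y cy) => cgy fgy.
  by rewrite (H3 _ a _ cgx cgy) fgx fgy.
by case: (H2 y cy) => cgy fgy; rewrite (H4 _ cgy) fgy.
Qed.

Lemma end_isomorphic_trans r v u w :
  end_isomorphic E r v u -> end_isomorphic E r u w -> end_isomorphic E r v w.
Proof.
case=> f1 [g1 [H1 H2 H3 H4]]; case=> f2 [g2 [K1 K2 K3 K4]].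
exists (f2 \o f1), (g1 \o g2); split => /=.
- by move=> x /H1 [/K1 [? ->] ->].
- by move=> y /K2 [/H2 [? ->] ->].
- by move=> x a y cx cy; rewrite H3 // K3 //; [case: (H1 x cx) | case: (H1 y cy)].
- by move=> x cx; rewrite H4 // K4 //; case: (H1 x cx).
Qed.

Lemma deterministic_bounded_degree : deterministic E -> bounded_degree E.
Proof.
move=> det; exists #|A| => u n h hinj hE.
suff inj : injective (fun i => (h i).1) by have := @leq_card _ _ _ inj; rewrite card_ord.
move=> i j Hij; apply: hinj; have := hE i; have := hE j; rewrite /= Hij => H1 H2.
by rewrite [h i]surjective_pairing [h j]surjective_pairing Hij (det _ _ _ _ H2 H1).
Qed.

End Graphs.

Lemma walk_map (A : finType) (V W : Type) (E : V -> A -> V -> Prop)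
    (F : W -> A -> W -> Prop) (f : V -> W) u v n :
  (forall x a y, E x a y -> F (f x) a (f y)) -> walk E u v n -> walk F (f u) (f v) n.
Proof.
move=> Hf; elim=> [x|x a y z k Hxy _ IH]; first exact: walk0.
exact: walkS (Hf _ _ _ Hxy) IH.
Qed.

Lemma level_iso (A : finType) (V W : Type) (E : V -> A -> V -> Prop)
    (F : W -> A -> W -> Prop) (f : V -> W) (g : W -> V) u v n :
  cancel f g -> cancel g f -> (forall x a y, E x a y <-> F (f x) a (f y)) ->
  level E u v n -> level F (f u) (f v) n.
Proof.
move=> fK gK Hf [Hn Hmin]; split=> [|m Hm]; first by apply: walk_map Hn => x a y /Hf.
have GE : forall x a y, F x a y -> E (g x) a (g y) by move=> x a y; rewrite Hf !gK.
by apply: Hmin; have := walk_map GE Hm; rewrite !fK.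
Qed.

Section Runs.
Variables (A : finType) (inv : A -> A) (Q : finType) (T : Q -> A -> option Q) (p : Q).

Lemma is_run_cat q s1 s2 : is_run T q (s1 ++ s2) = is_run T q s1 && is_run T (path_end q s1) s2.
Proof. by elim: s1 q => [|[[q1 a] q2] s1 IH] q //=; rewrite IH !andbA. Qed.

Lemma is_run_rcons q s q1 a q2 :
  is_run T q (rcons s (q1, a, q2)) = [&& is_run T q s, q1 == path_end q s & T q1 a == Some q2].
Proof. by rewrite -cats1 is_run_cat /= andbT. Qed.

Lemma is_run_labels_inj q s1 s2 :
  is_run T q s1 -> is_run T q s2 -> labels s1 = labels s2 -> s1 = s2.
Proof.
elim: s1 q s2 => [|[[q1 a] q2] s1 IH] q [|[[q1' a'] q2'] s2] //=.
case/and3P=> /eqP -> /eqP T1 R1 /and3P [/eqP -> /eqP T2 R2] [Ha Hs]; subst a'.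
by move: T2; rewrite T1 => -[?]; subst q2'; rewrite (IH _ _ R1 R2 Hs).
Qed.

Lemma run_edge_size (x y : run T p) a : run_edge inv x a y ->
  size (sval y) = (size (sval x)).+1 \/ size (sval x) = (size (sval y)).+1.
Proof. by case=> -[t [-> _]]; rewrite size_rcons; [left | right]. Qed.

Lemma level_run (s : run T p) : level (@run_edge A inv Q T p) (run_root T p) s (size (sval s)).
Proof.
split; last first.
  move=> m Hm; have := walk_bound (d := fun s : run T p => size (sval s)) _ Hm.
  by apply=> x a y /run_edge_size []; lia.
case: s => s Hs /=; elim/last_ind: s Hs => [|s [[q1 a] q2] IH] Hs.
  have -> : exist _ [::] Hs = run_root T p by apply: val_inj.
  exact: walk0.
have Hs' : is_run T p s by move: Hs; rewrite is_run_rcons => /and3P [].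
rewrite size_rcons; apply: walk_rcons (IH Hs') _.
by left; exists (q1, a, q2).
Qed.

Hypothesis red : reduced_pdfa inv T.

Lemma run_edge_det (x y y' : run T p) a :
  run_edge inv x a y -> run_edge inv x a y' -> y = y'.
Proof.
have no_backtrack (u v w : run T p) t t' : sval v = rcons (sval u) t ->
    sval u = rcons (sval w) t' -> t.1.2 = inv t'.1.2 -> False.
  case: t t' => [[q1 b] q2] [[q1' b'] q2'] /= Hv Hu Hb; subst b.
  have := svalP v; rewrite Hv is_run_rcons Hu path_end_rcons => /and3P [_ /eqP e1 /eqP e2].
  have := svalP u; rewrite Hu is_run_rcons => /and3P [_ _ /eqP e2'].
  by subst q1; apply: red e2' e2.
case=> -[t [Ht Hta]] [] -[t' [Ht' Hta']]; apply: val_inj.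
- apply: (is_run_labels_inj (svalP y) (svalP y')).
  by rewrite Ht Ht' !labels_rcons Hta Hta'.
- by case: (no_backtrack _ _ _ _ _ Ht Ht'); rewrite Hta Hta'.
- by case: (no_backtrack _ _ _ _ _ Ht' Ht); rewrite Hta Hta'.
- by move: Ht'; rewrite Ht => /rcons_inj [].
Qed.

End Runs.

Section Tree.
Variables (A : finType) (inv : A -> A).
Hypothesis inv_invol : involutive inv.
Variables (V : Type) (E : V -> A -> V -> Prop) (r : V).
Hypothesis HE : involutive_graph inv E.
Hypothesis Htree : is_tree inv E r.

Lemma edge_sym u a v : E u a v -> E v (inv a) u.
Proof. exact: (proj1 (HE u a v)). Qed.

Definition geodesic (v : V) : seq (V * A * V) :=
  proj1_sig (constructive_indefinite_description _ (Htree v)).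

Lemma geodesicP v :
  [/\ is_path_from E r (geodesic v), reduced_path inv (geodesic v) & path_end r (geodesic v) = v].
Proof. exact: (proj1 (proj2_sig (constructive_indefinite_description _ (Htree v)))). Qed.

Lemma geodesic_end v : path_end r (geodesic v) = v.
Proof. by case: (geodesicP v). Qed.

Lemma geodesic_uniq p : is_path_from E r p -> reduced_path inv p -> geodesic (path_end r p) = p.
Proof.
move=> Hp Hr; rewrite /geodesic.
case: constructive_indefinite_description => q /= [_ Hq]; exact: Hq.
Qed.

Lemma geodesic_inj : injective geodesic.
Proof. by move=> u v H; rewrite -(geodesic_end u) H geodesic_end. Qed.

Lemma geodesic_root : geodesic r = [::].
Proof. exact: (@geodesic_uniq [::]). Qed.

Definition depth v := size (geodesic v).

Definition down u a w := E u a w /\ depth w = (depth u).+1.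

Lemma geodesic_rcons v p x a y : geodesic v = rcons p (x, a, y) ->
  [/\ geodesic x = p, y = v & down x a y].
Proof.
move=> Hv; case: (geodesicP v); rewrite Hv is_path_from_rcons path_end_rcons.
case=> Hp Hx He /reduced_path_rconsl Hr Hy.
have Hgx : geodesic x = p by rewrite Hx geodesic_uniq.
by split => //; split => //; rewrite /depth Hy Hv Hgx size_rcons.
Qed.

Lemma edge_geodesic u a w : E u a w ->
  geodesic w = rcons (geodesic u) (u, a, w) \/ geodesic u = rcons (geodesic w) (w, inv a, u).
Proof.
move=> He; case: (geodesicP u) => Hp Hr Hend.
case: (reduced_path_rcons u a w Hr) => [H|[p0 [b [Hu Ha]]]].
  left; rewrite -[in LHS](path_end_rcons r (geodesic u) u a w) geodesic_uniq //.
  by rewrite is_path_from_rcons Hend.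
by right; case: (geodesic_rcons Hu) => Hw _ _; rewrite Hu Hw Ha inv_invol.
Qed.

Lemma depth_root : depth r = 0.
Proof. by rewrite /depth geodesic_root. Qed.

Lemma depth_edge u a w : E u a w -> depth w = (depth u).+1 \/ depth u = (depth w).+1.
Proof. by rewrite /depth => /edge_geodesic [] ->; rewrite size_rcons; [left|right]. Qed.

Lemma down_geodesic u a w : down u a w -> geodesic w = rcons (geodesic u) (u, a, w).
Proof. by case=> /edge_geodesic [] // H; rewrite /depth H size_rcons; lia. Qed.

Lemma up_geodesic u a w : E u a w -> depth u = (depth w).+1 ->
  geodesic u = rcons (geodesic w) (w, inv a, u).
Proof. by move=> /edge_geodesic [] // H; rewrite /depth H size_rcons; lia. Qed.

Definition descendant v x := exists p, geodesic x = geodesic v ++ p.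

Lemma descendant_refl v : descendant v v.
Proof. by exists [::]; rewrite cats0. Qed.

Lemma descendant_depth v x : descendant v x -> depth v <= depth x /\ (x <> v -> depth v < depth x).
Proof.
case=> [[|e p]] H; rewrite /depth H size_cat /=; last by split; lia.
by split=> [|Hne]; [lia | case: Hne; apply: geodesic_inj; rewrite H cats0].
Qed.

Lemma descendant_down v x a y : descendant v x -> down x a y -> descendant v y.
Proof. by case=> p H /down_geodesic Hy; exists (rcons p (x, a, y)); rewrite Hy H rcons_cat. Qed.

Lemma descendant_edge_out v x a y : descendant v x -> E x a y -> ~ descendant v y ->
  x = v /\ geodesic v = rcons (geodesic y) (y, inv a, v).
Proof.
case=> p Hp He Hn; case: (edge_geodesic He) => H.
  by case: Hn; exists (rcons p (x, a, y)); rewrite H Hp rcons_cat.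
case/lastP: p Hp => [|p e] Hp.
  by rewrite cats0 in Hp; have Hxv := geodesic_inj Hp; subst x.
by case: Hn; exists p; move: H; rewrite Hp -rcons_cat => /rcons_inj [].
Qed.

Lemma walk_depth u x m : walk E u x m -> depth x <= depth u + m.
Proof. by apply: walk_bound => y a z /depth_edge []; lia. Qed.

Lemma level_depth x : level E r x (depth x).
Proof.
case: (geodesicP x) => Hx _ He; split; first by have := path_walk Hx; rewrite He.
by move=> m /walk_depth; rewrite depth_root.
Qed.

Lemma level_exists_tree u v : exists n, level E u v n.
Proof.
apply: level_exists; case: (level_depth u) => /(walk_sym HE) Hu _.
by case: (level_depth v) => Hv _; eexists; apply: walk_cat Hu Hv.
Qed.

(* The hypotheses say that [v] is strictly closer to [r'] than its proper descendants,
   and farther from [r'] than its parent. *)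
Lemma cone_subtree r' v n : level E r' v n ->
  (forall x m, descendant v x -> walk E r' x m -> n <= m /\ (x <> v -> n < m)) ->
  (forall y a, ~ descendant v y -> E v a y -> exists2 k, k < n & level E r' y k) ->
  (forall x, in_cone E r' v x <-> descendant v x) /\ (forall x, frontier E r' v x <-> x = v).
Proof.
move=> Hv Hdesc Hparent.
have cone_sub x : in_cone E r' v x -> descendant v x.
  case=> n0 [Hv0]; rewrite -(level_uniq Hv Hv0) => Hw.
  suff: forall u t, walk_in E (fun x => exists k, level E r' x k /\ n <= k) u t ->
    descendant v u -> descendant v t by move/(_ _ _ Hw (descendant_refl v)).
  move=> u0 t0; elim=> // u a w t _ Huw Hwt IH Hu; apply: IH; apply: NNPP => Hn.
  case: (descendant_edge_out Hu Huw Hn) => Huv _; subst u.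
  case: (Hparent _ _ Hn Huw) => k Hk Hlk.
  have [k' [Hlk' Hnk']] : exists k, level E r' w k /\ n <= k by case: Hwt.
  by have := level_uniq Hlk Hlk'; lia.
have sub_cone x : descendant v x -> in_cone E r' v x.
  case=> p Hp; exists n; split => //.
  elim/last_ind: p x Hp => [|p [[y a] z] IH] x Hp.
    by rewrite cats0 in Hp; rewrite (geodesic_inj Hp); apply: walk_in0; exists n.
  rewrite -rcons_cat in Hp; case: (geodesic_rcons Hp) => Hy Hz [He _]; subst z.
  apply: walk_in_rcons (IH _ Hy) He _.
  case: (level_exists_tree r' x) => k Hk; exists k; split => //.
  have Hx : descendant v x by exists (rcons p (y, a, x)); rewrite Hp rcons_cat.
  by case: (Hdesc x k Hx (proj1 Hk)).
split => x; split; [exact: cone_sub | exact: sub_cone | |].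
  case=> /cone_sub Hx [n' [/(level_uniq Hv) <- [Hx' _]]].
  by apply: NNPP => Hne; case: (Hdesc x n Hx Hx') => _ /(_ Hne); lia.
by move=> ->; split; [apply: sub_cone; apply: descendant_refl | exists n].
Qed.

Lemma cone_root v :
  (forall x, in_cone E r v x <-> descendant v x) /\ (forall x, frontier E r v x <-> x = v).
Proof.
apply: cone_subtree (level_depth v) _ _.
  move=> x m /descendant_depth [H1 H2] /walk_depth; rewrite depth_root.
  by split; [lia | move=> /H2; lia].
move=> y a Hn He; case: (descendant_edge_out (descendant_refl v) He Hn) => _ H.
by exists (depth y); [rewrite /depth H size_rcons | apply: level_depth].
Qed.

Lemma walk_enter_subtree v y x m : walk E y x m -> ~ descendant v y -> descendant v x ->
  exists y0 a k k', [/\ ~ descendant v y0, E y0 a v, walk E y y0 k, walk E v x k' & m = k + k'.+1].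
Proof.
elim=> [z|z b w t k Hzw Hwt IH] Hn Hs //.
case: (classic (descendant v w)) => Hw.
  case: (descendant_edge_out Hw (edge_sym Hzw) Hn) => Hwv _; subst w.
  by exists z, b, 0, k; split => //; apply: walk0.
case: (IH Hw Hs) => y0 [a [k1 [k2 [H1 H2 H3 H4 ->]]]].
by exists y0, a, k1.+1, k2; split => //; apply: walkS Hzw H3.
Qed.

Lemma cone_away r' v : ~ descendant v r' ->
  (forall x, in_cone E r' v x <-> descendant v x) /\ (forall x, frontier E r' v x <-> x = v).
Proof.
move=> Hr; case: (level_exists_tree r' v) => n Hv; apply: (cone_subtree Hv).
  move=> x m Hx Hw; case: (walk_enter_subtree Hw Hr Hx) => y0 [a [k [k' [_ H2 H3 H4 H5]]]].
  have Hk : n <= k.+1 by case: Hv => _; apply; apply: walk_rcons H3 H2.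
  split=> [|Hne]; first by lia.
  by case: k' H4 H5 => [|k'] H4 H5; [case: Hne; inversion H4 | lia].
move=> y a Hn He; case: (Hv) => Hw _.
case: (walk_enter_subtree Hw Hr (descendant_refl v)) => y0 [b [k [k' [H1 H2 H3 _ H5]]]].
case: (descendant_edge_out (descendant_refl v) (edge_sym H2) H1) => _ Hp0.
case: (descendant_edge_out (descendant_refl v) He Hn) => _ Hp.
have Hy : y = y0 by apply: geodesic_inj; move: Hp; rewrite Hp0 => /rcons_inj [].
subst y0; case: (level_exists_tree r' y) => k0 Hk0; exists k0 => //.
by case: Hk0 => _ /(_ _ H3); lia.
Qed.

Section Deterministic.
Hypothesis det : deterministic E.

Definition child u a : option V :=
  if excluded_middle_informative (exists c, down u a c) is left H
  then Some (proj1_sig (constructive_indefinite_description _ H)) else None.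

Lemma childP u a c : child u a = Some c <-> down u a c.
Proof.
rewrite /child; case: excluded_middle_informative => [H|H]; last first.
  by split=> // Hc; case: H; exists c.
case: constructive_indefinite_description => c' /= Hc'.
by split=> [[<-] //|Hc]; rewrite (det (proj1 Hc') (proj1 Hc)).
Qed.

Fixpoint follow u (s : seq A) : option V :=
  if s is a :: s' then (if child u a is Some c then follow c s' else None) else Some u.

Lemma follow_rcons u s a : follow u (rcons s a) = obind (child^~ a) (follow u s).
Proof. by elim: s u => [|b s IH] u /=; case: (child u _). Qed.

Lemma follow_down u s a x y :
  follow u s = Some x -> follow u (rcons s a) = Some y -> down x a y.
Proof. by rewrite follow_rcons => -> /childP. Qed.

Lemma followP v s x :
  follow v s = Some x <-> exists2 p, geodesic x = geodesic v ++ p & labels p = s.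
Proof.
split.
  elim/last_ind: s x => [|s a IH] x; first by case=> <-; exists [::]; rewrite ?cats0.
  rewrite follow_rcons; case Hy: (follow v s) => [y|] //= /childP Hd.
  case: (IH y Hy) => p Hp <-; exists (rcons p (y, a, x)).
    by rewrite (down_geodesic Hd) Hp rcons_cat.
  by rewrite labels_rcons.
case=> p + <-; elim/last_ind: p x => [|p [[y a] z] IH] x Hx.
  by rewrite cats0 in Hx; rewrite (geodesic_inj Hx).
rewrite -rcons_cat in Hx; case: (geodesic_rcons Hx) => Hy <- Hd.
by rewrite labels_rcons follow_rcons (IH _ Hy) /=; apply/childP.
Qed.

Definition word v x := labels (drop (depth v) (geodesic x)).

Lemma follow_word v x : descendant v x -> follow v (word v x) = Some x.
Proof. by case=> p Hp; apply/followP; exists p; rewrite // /word Hp drop_size_cat. Qed.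

Lemma word_follow v s x : follow v s = Some x -> descendant v x /\ word v x = s.
Proof.
by case/followP=> p Hp <-; split; [exists p | rewrite /word Hp drop_size_cat].
Qed.

Definition same_lang u w := forall s, isSome (follow u s) = isSome (follow w s).

Lemma same_lang_child u w a : same_lang u w -> isSome (child u a) = isSome (child w a).
Proof. by move/(_ [:: a]) => /=; case: (child u a); case: (child w a). Qed.

Lemma same_lang_children u w a c c' :
  same_lang u w -> child u a = Some c -> child w a = Some c' -> same_lang c c'.
Proof. by move=> H Hc Hc' s; have := H (a :: s); rewrite /= Hc Hc'. Qed.

Section SubtreeMap.
Variables (v w : V) (f : V -> V).
Hypotheses (fv : f v = w) (f_desc : forall x, descendant v x -> descendant w (f x))
  (f_inj : forall x y, descendant v x -> descendant v y -> f x = f y -> x = y)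
  (f_edge : forall x a y, descendant v x -> descendant v y -> E x a y -> E (f x) a (f y)).

(* If [f] turned [x -> y] upwards, [f y] would be the parent of [f x], which by induction is
   the image of the parent of [x]; injectivity forbids this. *)
Lemma subtree_map_down x a y : descendant v x -> down x a y -> down (f x) a (f y).
Proof.
move=> Dx Hd; have Dy := descendant_down Dx Hd.
have Efxy := f_edge Dx Dy (proj1 Hd).
case: (depth_edge Efxy) => Hdepth; first by split.
case: Dx Hd Hdepth => p; elim/last_ind: p x a y Dy Efxy => [|p [[x' b] z] IH] x a y Dy Efxy Hx Hd.
  rewrite cats0 in Hx; rewrite (geodesic_inj Hx) fv.
  by have [Hle _] := descendant_depth (f_desc Dy); lia.
rewrite -rcons_cat in Hx; case: (geodesic_rcons Hx) => Hx' Hz Hd'; subst z.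
have Dx' : descendant v x' by exists p.
have Dx : descendant v x by exists (rcons p (x', b, x)); rewrite Hx rcons_cat.
move=> Hup; have Hfd : down (f x') b (f x).
  have Efx := f_edge Dx' Dx (proj1 Hd').
  by case: (depth_edge Efx) => Hdown; [split | exact: IH Dx Efx Hx' Hd' Hdown].
have Hyx' : f y = f x'.
  by move: (up_geodesic Efxy Hup); rewrite (down_geodesic Hfd) => /rcons_inj [].
have := f_inj Dy Dx' Hyx'; case: Hd Hd' => _ + [_ +] Hyx; rewrite Hyx; lia.
Qed.

Lemma subtree_map_follow s x : follow v s = Some x -> follow w s = Some (f x).
Proof.
elim/last_ind: s x => [|s a IH] x; first by case=> <-; rewrite fv.
rewrite follow_rcons; case Hy: (follow v s) => [y|] //= /childP Hd.
rewrite follow_rcons (IH _ Hy) /=; apply/childP.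
exact: subtree_map_down (proj1 (word_follow Hy)) Hd.
Qed.

End SubtreeMap.

Lemma end_isomorphic_follow r' v w s : ~ descendant v r' -> ~ descendant w r' ->
  end_isomorphic E r' v w -> isSome (follow v s) -> isSome (follow w s).
Proof.
move=> Hv Hw [f [g [Hf _ Hedge Hfront]]].
case: (cone_away Hv) => Cv Fv; case: (cone_away Hw) => Cw Fw.
have fv : f v = w.
  by apply/Fw; apply/(Hfront v); [apply/Cv; apply: descendant_refl | apply/Fv].
case Hx: (follow v s) => [x|] // _; rewrite (subtree_map_follow fv _ _ _ Hx) //.
- by move=> y /Cv /Hf [/Cw].
- by move=> y z /Cv /Hf [_ Hy] /Cv /Hf [_ Hz] Hyz; rewrite -Hy -Hz Hyz.
- by move=> y a z /Cv Dy /Cv Dz; rewrite Hedge.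
Qed.

Lemma end_isomorphic_same_lang r' v w : ~ descendant v r' -> ~ descendant w r' ->
  end_isomorphic E r' v w -> same_lang v w.
Proof.
move=> Hv Hw Hvw s; apply/idP/idP; first exact: end_isomorphic_follow Hvw.
exact: end_isomorphic_follow (end_isomorphic_sym Hvw).
Qed.

Definition transfer v w x := odflt x (follow w (word v x)).

Section Transfer.
Variables (v w : V).
Hypothesis Hvw : same_lang v w.

Lemma transferP x : descendant v x ->
  [/\ follow w (word v x) = Some (transfer v w x), descendant w (transfer v w x)
    & word w (transfer v w x) = word v x].
Proof.
move=> Dx; have := Hvw (word v x); rewrite follow_word //=.
rewrite /transfer; case Hy: (follow w (word v x)) => [y|] // _.
by case: (word_follow Hy).
Qed.

Lemma transfer_root : transfer v w v = w.
Proof. by rewrite /transfer /word drop_size. Qed.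

Lemma transfer_edge x a y : descendant v x -> descendant v y ->
  E x a y -> E (transfer v w x) a (transfer v w y).
Proof.
suff down_edge x' b y' : descendant v x' -> down x' b y' -> E (transfer v w x') b (transfer v w y').
  move=> Dx Dy He; case: (depth_edge He) => Hd; first exact: down_edge.
  by apply/HE; apply: down_edge Dy _; split=> //; apply: edge_sym.
move=> Dx Hd; have Dy := descendant_down Dx Hd.
have Hwy : word v y' = rcons (word v x') b.
  apply: (proj2 (word_follow _)).
  by rewrite follow_rcons follow_word //=; apply/childP.
case: (transferP Dx) => Hx _ _; case: (transferP Dy) => Hy _ _.
by rewrite Hwy in Hy; case: (follow_down Hx Hy).
Qed.

End Transfer.

Lemma transferK v w x : same_lang v w -> descendant v x -> transfer w v (transfer v w x) = x.
Proof.
by move=> Hvw Dx; case: (transferP Hvw Dx) => _ _ Hw; rewrite /transfer Hw follow_word.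
Qed.

Lemma same_lang_end_isomorphic v w : same_lang v w -> end_isomorphic E r v w.
Proof.
move=> Hvw; have Hwv : same_lang w v by move=> s; rewrite Hvw.
case: (cone_root v) => Cv Fv; case: (cone_root w) => Cw Fw.
exists (transfer v w), (transfer w v); split.
- by move=> x /Cv Dx; split; [apply/Cw; case: (transferP Hvw Dx) | apply: transferK].
- by move=> y /Cw Dy; split; [apply/Cv; case: (transferP Hwv Dy) | apply: transferK].
- move=> x a y /Cv Dx /Cv Dy; split; first exact: transfer_edge.
  move=> Ef; have [_ Dfx _] := transferP Hvw Dx; have [_ Dfy _] := transferP Hvw Dy.
  by rewrite -(transferK Hvw Dx) -(transferK Hvw Dy); apply: transfer_edge.
- move=> x /Cv Dx; rewrite Fv Fw; split=> [->|Hx]; first exact: transfer_root.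
  by rewrite -(transferK Hvw Dx) Hx transfer_root.
Qed.

(* Only the finitely many ancestors of [r'] have cones that are not whole subtrees. *)
Lemma finite_lang_classes r' n (rep : 'I_n -> V) :
  (forall v, exists i, end_isomorphic E r' v (rep i)) ->
  exists (J : finType) (rep' : J -> V), forall v, exists j, same_lang v (rep' j).
Proof.
move=> Hrep.
pose away (i : 'I_n) : V :=
  if excluded_middle_informative (exists v, ~ descendant v r' /\ end_isomorphic E r' v (rep i))
  is left H then proj1_sig (constructive_indefinite_description _ H) else r.
pose ancestor (k : 'I_(depth r').+1) := path_end r (take k (geodesic r')).
exists ('I_n + 'I_(depth r').+1)%type.
exists (fun j => match j with inl i => away i | inr k => ancestor k end) => v.
case: (classic (descendant v r')) => Hv.
  case: (Hv) => p Hp; have Hk : depth v < (depth r').+1 by rewrite /depth Hp size_cat; lia.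
  by exists (inr (Ordinal Hk)); rewrite /= /ancestor Hp take_size_cat // geodesic_end.
case: (Hrep v) => i Hi; exists (inl i); rewrite /= /away.
case: excluded_middle_informative => [H|H]; last by case: H; exists v.
case: constructive_indefinite_description => v' /= [Hv' Hei].
exact: end_isomorphic_same_lang Hv Hv' (end_isomorphic_trans Hi (end_isomorphic_sym Hei)).
Qed.

Section Automaton.
Variables (J : finType) (rep : J -> V).
Hypothesis Hrep : forall v, exists j, same_lang v (rep j).

Definition state v : J :=
  odflt (proj1_sig (constructive_indefinite_description _ (Hrep r)))
    [pick j | classicb (same_lang v (rep j))].

Lemma state_same_lang v : same_lang v (rep (state v)).
Proof.
rewrite /state; case: pickP => [j /classicbP //|Hnone].
by case: (Hrep v) => j Hj; move: (Hnone j) => /classicbP.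
Qed.

Lemma state_eq v w : same_lang v w -> state v = state w.
Proof.
move=> Hvw; rewrite /state; congr odflt; apply: eq_pick => j.
by apply/classicbP/classicbP => H s; rewrite -H Hvw.
Qed.

Definition trans (j : J) (a : A) : option J := omap state (child (rep j) a).

Lemma trans_state x a : trans (state x) a = omap state (child x a).
Proof.
have Hx := state_same_lang x; have := same_lang_child a Hx; rewrite /trans.
case Hc: (child x a) => [c|]; case Hc': (child _ a) => [c'|] //= _.
by congr Some; apply: state_eq; apply: (same_lang_children _ Hc' Hc) => s; rewrite Hx.
Qed.

Lemma trans_reduced : reduced_pdfa inv trans.
Proof.
move=> q1 q2 q3 a; rewrite /trans; case Hc: (child (rep q1) a) => [c|] //= [<-].
rewrite -/(trans _ _) trans_state; case Hy: (child c (inv a)) => [y|] // _.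
move: Hc Hy => /childP [Ec Hdc] /childP [Ey Hdy].
by rewrite (det Ey (edge_sym Ec)) in Hdy; lia.
Qed.

Definition state_edge (e : V * A * V) : J * A * J := (state e.1.1, e.1.2, state e.2).

Lemma labels_state_edge p : labels (map state_edge p) = labels p.
Proof. by rewrite /labels -map_comp. Qed.

Lemma path_end_state_edge u p : path_end (state u) (map state_edge p) = state (path_end u p).
Proof. by elim: p u => [|[[x a] y] p IH] u //=. Qed.

Lemma is_run_geodesic v : is_run trans (state r) (map state_edge (geodesic v)).
Proof.
have [p Hp] : exists p, geodesic v = p by eexists.
rewrite Hp; elim/last_ind: p v Hp => [|p [[x a] y] IH] v Hp //.
case: (geodesic_rcons Hp) => Hx _ /childP Hd.
rewrite map_rcons is_run_rcons (IH x Hx) path_end_state_edge -Hx geodesic_end eqxx /=.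
by rewrite trans_state Hd.
Qed.

Definition to_run v : run trans (state r) :=
  exist _ (map state_edge (geodesic v)) (is_run_geodesic v).

Definition of_run (s : run trans (state r)) : V := odflt r (follow r (labels (sval s))).

Lemma follow_root_geodesic v : follow r (labels (geodesic v)) = Some v.
Proof. by apply/followP; exists (geodesic v); rewrite ?geodesic_root. Qed.

Lemma follow_run u s : is_run trans (state u) s -> isSome (follow u (labels s)).
Proof.
elim: s u => [|[[q1 a] q2] s IH] u //=.
case/and3P=> /eqP -> /eqP; rewrite trans_state.
by case: (child u a) => [c|] //= [<-]; apply: IH.
Qed.

Lemma to_runK : cancel to_run of_run.
Proof. by move=> v; rewrite /of_run /= labels_state_edge follow_root_geodesic. Qed.

Lemma of_runK : cancel of_run to_run.
Proof.
move=> s; apply: val_inj; have := follow_run (svalP s).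
rewrite /of_run; case Hx: (follow r _) => [x|] //= _.
apply: (is_run_labels_inj (is_run_geodesic x) (svalP s)).
by case: (word_follow Hx) => _ <-; rewrite labels_state_edge /word depth_root drop0.
Qed.

Lemma to_run_rcons u v t : sval (to_run v) = rcons (sval (to_run u)) t -> down u t.1.2 v.
Proof.
move=> /(congr1 (@labels _ _)); rewrite /= labels_rcons !labels_state_edge => Hl.
by apply: (follow_down (follow_root_geodesic u)); rewrite -Hl follow_root_geodesic.
Qed.

Lemma to_run_edge u a v : E u a v <-> run_edge inv (to_run u) a (to_run v).
Proof.
split=> [He | [[t [/to_run_rcons [Ht _] <-]] | [t [/to_run_rcons [Ht _] Ha]]]] //.
- case: (depth_edge He) => Hd.
    by left; exists (state_edge (u, a, v)); rewrite /= (down_geodesic (conj He Hd)) map_rcons.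
  right; exists (state_edge (v, inv a, u)); split; last by rewrite /= inv_invol.
  by rewrite /= (up_geodesic He Hd) map_rcons.
- by apply/HE; rewrite -Ha inv_invol.
Qed.

Lemma tree_iso_runs :
  rooted_iso E r (@run_edge A inv J trans (state r)) (run_root trans (state r)).
Proof.
exists to_run, of_run; split; [exact: to_runK | exact: of_runK | | exact: to_run_edge].
by apply: val_inj; rewrite /= geodesic_root.
Qed.

End Automaton.

End Deterministic.

Section FromRuns.
Variables (Q : finType) (T : Q -> A -> option Q) (p : Q).
Hypothesis red : reduced_pdfa inv T.
Variables (f : V -> run T p) (g : run T p -> V).
Hypotheses (fK : cancel f g) (gK : cancel g f) (fr : f r = run_root T p)
  (Hedge : forall u a v, E u a v <-> run_edge inv (f u) a (f v)).

Lemma iso_deterministic : deterministic E.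
Proof.
by move=> u a v v' /Hedge H1 /Hedge H2; apply: (can_inj fK); apply: run_edge_det H1 H2.
Qed.

Let det := iso_deterministic.

Lemma size_iso x : size (sval (f x)) = depth x.
Proof.
have := level_iso fK gK Hedge (level_depth x); rewrite fr.
exact: level_uniq (level_run _ _).
Qed.

Lemma down_iso x a y : down x a y <-> exists2 t, sval (f y) = rcons (sval (f x)) t & t.1.2 = a.
Proof.
split=> [[/Hedge [[t [Ht Ha]]|[t [Ht _]]] Hd] | [t Ht Ha]]; first by exists t.
  by move: (congr1 size Ht); rewrite size_rcons !size_iso Hd; lia.
split; first by apply/Hedge; left; exists t.
by rewrite -!size_iso Ht size_rcons.
Qed.

Definition iso_state x := path_end p (sval (f x)).

Lemma follow_iso_run x s y :
  follow x s = Some y -> exists2 t, sval (f y) = sval (f x) ++ t & labels t = s.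
Proof.
elim/last_ind: s y => [|s a IH] y; first by case=> <-; exists [::]; rewrite ?cats0.
rewrite follow_rcons; case Hz: (follow x s) => [z|] //= /(childP det) /down_iso [t Ht <-].
case: (IH z Hz) => t0 Ht0 <-; exists (rcons t0 t); last exact: labels_rcons.
by rewrite Ht Ht0 rcons_cat.
Qed.

Lemma run_iso_follow x t : is_run T (iso_state x) t ->
  exists2 y, follow x (labels t) = Some y & sval (f y) = sval (f x) ++ t.
Proof.
elim/last_ind: t => [|t [[q1 a] q2] IH]; first by exists x; rewrite ?cats0.
rewrite is_run_rcons => /and3P [/IH [y Hy Hfy] /eqP Hq1 /eqP HT].
have Hrun : is_run T p (rcons (sval (f y)) (q1, a, q2)).
  by rewrite is_run_rcons (svalP (f y)) HT Hfy path_end_cat -Hq1 !eqxx.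
pose z := g (exist _ (rcons (sval (f y)) (q1, a, q2)) Hrun).
have Hfz : sval (f z) = rcons (sval (f y)) (q1, a, q2) by rewrite /z gK.
exists z; last by rewrite Hfz Hfy rcons_cat.
rewrite labels_rcons follow_rcons Hy /=; apply/(childP det)/down_iso.
by exists (q1, a, q2).
Qed.

Lemma iso_state_same_lang x y : iso_state x = iso_state y -> same_lang x y.
Proof.
suff follow_ext x' y' s : iso_state x' = iso_state y' ->
    isSome (follow x' s) -> isSome (follow y' s).
  by move=> Hxy s; apply/idP/idP; apply: follow_ext.
move=> Hxy; case Hz: (follow x' s) => [z|] // _.
case: (follow_iso_run Hz) => t Ht <-.
have : is_run T (iso_state x') t by move: (svalP (f z)); rewrite Ht is_run_cat => /andP [].
by rewrite Hxy => /run_iso_follow [w ->].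
Qed.

Lemma iso_context_free : context_free E.
Proof.
split; first exact: deterministic_bounded_degree.
pose rep q : V := if excluded_middle_informative (exists v, iso_state v = q) is left H
  then proj1_sig (constructive_indefinite_description _ H) else r.
exists r, #|Q|, (fun i => rep (enum_val i)) => v; exists (enum_rank (iso_state v)).
apply: (same_lang_end_isomorphic det); rewrite enum_rankK; apply: iso_state_same_lang.
rewrite /rep; case: excluded_middle_informative => [H|[]]; last by exists v.
by case: constructive_indefinite_description.
Qed.

End FromRuns.
End Tree.

Theorem theorem3p9 (A : finType) (inv : A -> A) (inv_invol : involutive inv)
  (V : Type) (E : V -> A -> V -> Prop) (r : V)
  (HE : involutive_graph inv E) (Htree : is_tree inv E r) :
  (deterministic E /\ context_free E) <->
  exists (Q : finType) (T : Q -> A -> option Q) (p : Q),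
    reduced_pdfa inv T /\ rooted_iso E r (@run_edge A inv Q T p) (run_root T p).
Proof.
split.
  case=> det [_ [r' [n [rep Hrep]]]].
  have [J [rep' Hrep']] := finite_lang_classes inv_invol HE Htree det Hrep.
  exists J, (trans Hrep'), (state Hrep' r).
  by split; [exact: trans_reduced | exact: tree_iso_runs].
case=> Q [T [p [red [f [g [fK gK fr Hedge]]]]]].
split; first exact: (iso_deterministic red fK Hedge).
exact: (iso_context_free inv_invol HE Htree red fK gK fr Hedge).
Qed.
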